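(* The Steiner point $X_{99}'$ of the cusp triangle $T'=P_1'P_2'P_3'$ is $$X_{99}'=\left(\frac{a^2-2b^2}{a}\cos u,\;-\frac{2a^2-b^2}{b}\sin u\right).$$
   Context: Let $a>b>0$ and $c>0$ with $c^2=a^2-b^2$. Fix $u\in\mathbb{R}$. Let $\Delta_u(t)=(x_u(t),y_u(t))$, where $x_u(t)=\frac1a\big(c^2(1+\cos(t+u))\cos t-a^2\cos u\big)$ and $y_u(t)=\frac1b\big(c^2\cos t\sin(t+u)-c^2\sin t-a^2\sin u\big)$ (the negative pedal curve of the ellipse $x^2/a^2+y^2/b^2=1$ with respect to its point $(a\cos u,b\sin u)$). For $i=1,2,3$ let $t_i=-u/3-2\pi(i-1)/3$ and $P_i'=\Delta_u(t_i)$. The Steiner circumellipse of a triangle is the ellipse through its vertices centered at its centroid; the Steiner point $X_{99}$ of a triangle is the fourth common point (counted with multiplicity) of its circumcircle and its Steiner circumellipse, besides the three vertices. *)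

From Stdlib Require Import Reals.
Open Scope R_scope.

Definition pt : Type := (R * R)%type.

(* The negative pedal curve Delta_u(t) of the ellipse x^2/a^2+y^2/b^2=1
   with respect to its point (a cos u, b sin u); c^2 = a^2 - b^2. *)
Definition Delta (a b c u t : R) : pt :=
  ( / a * (c ^ 2 * (1 + cos (t + u)) * cos t - a ^ 2 * cos u),
    / b * (c ^ 2 * cos t * sin (t + u) - c ^ 2 * sin t - a ^ 2 * sin u) ).

Definition tpar (u : R) (i : nat) : R := - u / 3 - 2 * PI * (INR i - 1) / 3.

Definition cusp_vertex (a b c u : R) (i : nat) : pt := Delta a b c u (tpar u i).

Definition centroid (A B C : pt) : pt :=
  ((fst A + fst B + fst C) / 3, (snd A + snd B + snd C) / 3).

Definition circ_pt (O : pt) (r th : R) : pt :=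
  (fst O + r * cos th, snd O + r * sin th).

Definition on_circle (O : pt) (r : R) (P : pt) : Prop :=
  (fst P - fst O) ^ 2 + (snd P - snd O) ^ 2 = r ^ 2.

Definition is_circumcircle (A B C O : pt) (r : R) : Prop :=
  0 < r /\ on_circle O r A /\ on_circle O r B /\ on_circle O r C.

(* Quadratic form centered at G with symmetric matrix [[q11,q12],[q12,q22]];
   the ellipse is { P | qform G q11 q12 q22 P = 1 }. *)
Definition qform (G : pt) (q11 q12 q22 : R) (P : pt) : R :=
  let dx := fst P - fst G in let dy := snd P - snd G in
  q11 * dx ^ 2 + 2 * q12 * dx * dy + q22 * dy ^ 2.

Definition is_steiner_circumellipse (A B C : pt) (q11 q12 q22 : R) : Prop :=
  0 < q11 /\ 0 < q11 * q22 - q12 ^ 2 /\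
  qform (centroid A B C) q11 q12 q22 A = 1 /\
  qform (centroid A B C) q11 q12 q22 B = 1 /\
  qform (centroid A B C) q11 q12 q22 C = 1.

(* X is the Steiner point X_99 of ABC: the fourth common point, counted with
   multiplicity, of the circumcircle and the Steiner circumellipse.
   Intersections with multiplicity are read off the circle parametrization
   th |-> O + r(cos th, sin th): the restriction of the ellipse equation to
   the circle is a trigonometric polynomial of degree 2, which factors as
   K * prod_{i=1..4} sin((th - th_i)/2); the th_i (with repetition) are the
   intersection parameters with multiplicity. *)
Definition is_steiner_point (A B C X : pt) : Prop :=
  exists (O : pt) (r q11 q12 q22 th1 th2 th3 th4 K : R),
    is_circumcircle A B C O r /\
    is_steiner_circumellipse A B C q11 q12 q22 /\
    circ_pt O r th1 = A /\ circ_pt O r th2 = B /\ circ_pt O r th3 = C /\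
    circ_pt O r th4 = X /\
    K <> 0 /\
    (forall th : R,
       qform (centroid A B C) q11 q12 q22 (circ_pt O r th) - 1 =
       K * sin ((th - th1) / 2) * sin ((th - th2) / 2)
         * sin ((th - th3) / 2) * sin ((th - th4) / 2)).

From Pilot Require Import Defs.
From Stdlib Require Import Reals Lra Psatz Lia Classical.
Open Scope R_scope.

(* The three cusps P_i' = Delta_u(t_i) lie on the ellipse
   E(t) = G + (A cos t, B sin t), A = 3c^2/(2a), B = -3c^2/(2b), at the equally
   spaced eccentric angles th, th - 2pi/3, th - 4pi/3 (th = -u/3), and the
   claimed point is E(u) = E(-3 th).  So the theorem is an instance of a fact
   about any non-circular ellipse (steiner_point_equally_spaced): E is the
   Steiner circumellipse of such a triangle (its centre is the centroid), and
   the Steiner point is E(-3 th).  For the latter, the circumcircle is found in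
   the pencil spanned by E and a pair of chords (pencil_identity): one chord
   through two vertices, one through the third vertex and E(-3 th).  Hence these
   four points are concyclic, and on the circle the equation of E is a constant
   times the product of the two chords; a chord restricted to a circle is a
   product of two half-angle sines (factor_on_circle), which is exactly the
   factorisation defining the Steiner point.  If E(-3 th) is the third vertex,
   the vertices are paired differently. *)

Lemma sin_cos_sq (x : R) : sin x * sin x + cos x * cos x = 1.
Proof. pose proof (sin2_cos2 x) as H. unfold Rsqr in H. exact H. Qed.

Lemma eq_mod_pythagoras (t x y k : R) :
  x - y = k * (sin t * sin t + cos t * cos t - 1) -> x = y.
Proof. rewrite sin_cos_sq. lra. Qed.

Lemma cos_3a (t : R) : cos (3 * t) = 4 * cos t ^ 3 - 3 * cos t.
Proof.
  replace (3 * t) with (2 * t + t) by ring.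
  rewrite cos_plus, cos_2a_cos, sin_2a.
  apply (eq_mod_pythagoras t) with (k := - 2 * cos t). ring.
Qed.

Lemma sin_3a (t : R) : sin (3 * t) = 3 * sin t - 4 * sin t ^ 3.
Proof.
  replace (3 * t) with (2 * t + t) by ring.
  rewrite sin_plus, cos_2a_cos, sin_2a.
  apply (eq_mod_pythagoras t) with (k := 4 * sin t). ring.
Qed.

Lemma cos_4PI3 : cos (4 * (PI / 3)) = - 1 / 2.
Proof. replace (4 * (PI / 3)) with (PI / 3 + PI) by field. rewrite neg_cos, cos_PI3. field. Qed.

Lemma sin_4PI3 : sin (4 * (PI / 3)) = - (sqrt 3 / 2).
Proof. replace (4 * (PI / 3)) with (PI / 3 + PI) by field. rewrite neg_sin, sin_PI3. ring. Qed.

Lemma cos_sin_of_shift (x y : R) (k : nat) :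
  x + 2 * INR k * PI = - y -> cos x = cos y /\ sin x = - sin y.
Proof.
  intro H. rewrite <- (cos_period x k), <- (sin_period x k), H, cos_neg, sin_neg. auto.
Qed.

Lemma cos_sin_steiner_angle (phi s : R) (m : nat) :
  phi = - 3 * s - (2 * INR m + 1) * PI -> cos phi = - cos (3 * s) /\ sin phi = sin (3 * s).
Proof.
  intro Hphi. replace phi with (- ((3 * s + PI) + 2 * INR m * PI)) by (rewrite Hphi; ring).
  rewrite cos_neg, sin_neg, cos_period, sin_period, neg_cos, neg_sin. split; ring.
Qed.

Lemma sq_pos (x : R) : x <> 0 -> 0 < x ^ 2.
Proof. intro Hx. rewrite <- Rsqr_pow2. exact (Rsqr_pos_lt x Hx). Qed.

Lemma unit_vector_angle (x y : R) :
  x ^ 2 + y ^ 2 = 1 -> exists th, cos th = x /\ sin th = y.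
Proof.
  intro H.
  assert (Hx : -1 <= x <= 1) by nra.
  assert (Hy : sqrt (1 - x * x) = Rabs y).
  { replace (1 - x * x) with (Rsqr y) by (unfold Rsqr; lra). apply sqrt_Rsqr_abs. }
  destruct (Rle_lt_dec 0 y) as [Hy0 | Hy0].
  - exists (acos x). rewrite cos_acos, sin_acos by exact Hx. unfold Rsqr.
    rewrite Hy, Rabs_right by lra. auto.
  - exists (- acos x). rewrite cos_neg, sin_neg, cos_acos, sin_acos by exact Hx. unfold Rsqr.
    rewrite Hy, Rabs_left by lra. split; [reflexivity | ring].
Qed.

Definition line_form (l : pt -> R) : Prop :=
  exists nx ny k, (nx <> 0 \/ ny <> 0) /\ forall P, l P = nx * fst P + ny * snd P + k.

Definition wedge (O P Q : pt) : R :=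
  (fst P - fst O) * (snd Q - snd O) - (snd P - snd O) * (fst Q - fst O).

Lemma line_form_through (l : pt -> R) (O P : pt) :
  line_form l -> O <> P -> l O = 0 -> l P = 0 ->
  exists k, k <> 0 /\ forall Q, l Q = k * wedge O P Q.
Proof.
  intros [nx [ny [k [Hn Hl]]]] HOP HO HP.
  destruct O as [ox oy], P as [px py]. rewrite Hl in HO, HP. simpl in HO, HP.
  set (dx := px - ox). set (dy := py - oy).
  assert (Hd : 0 < dx * dx + dy * dy).
  { destruct (Req_dec dx 0) as [Ex | Ex]; [destruct (Req_dec dy 0) as [Ey | Ey] |].
    - exfalso. apply HOP. unfold dx, dy in *. f_equal; lra.
    - nra.
    - nra. }
  assert (Hortho : nx * dx + ny * dy = 0) by (unfold dx, dy; lra).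
  set (K := (ny * dx - nx * dy) / (dx * dx + dy * dy)).
  assert (Hd0 : dx * dx + dy * dy <> 0) by (apply Rgt_not_eq; exact Hd).
  assert (Hx : dx * (nx * dx + ny * dy) = 0) by (rewrite Hortho; ring).
  assert (Hy : dy * (nx * dx + ny * dy) = 0) by (rewrite Hortho; ring).
  assert (Ex : nx = - K * dy) by (unfold K; field_simplify_eq; [lra | exact Hd0]).
  assert (Ey : ny = K * dx) by (unfold K; field_simplify_eq; [lra | exact Hd0]).
  clearbody K. exists K. split.
  - intro Hk. rewrite Hk in Ex, Ey. destruct Hn; lra.
  - intros [qx qy]. rewrite Hl. unfold wedge; simpl. fold dx dy.
    assert (Hk : k = - (nx * ox + ny * oy)) by lra.
    rewrite Hk, Ex, Ey. ring.
Qed.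

Lemma line_forms_proportional (l m : pt -> R) (O P : pt) :
  line_form l -> line_form m -> O <> P ->
  l O = 0 -> l P = 0 -> m O = 0 -> m P = 0 ->
  exists k, k <> 0 /\ forall Q, l Q = k * m Q.
Proof.
  intros Hl Hm HOP HlO HlP HmO HmP.
  destruct (line_form_through l O P Hl HOP HlO HlP) as [kl [Hkl El]].
  destruct (line_form_through m O P Hm HOP HmO HmP) as [km [Hkm Em]].
  exists (kl / km). split.
  - unfold Rdiv. apply Rmult_integral_contrapositive_currified;
      [exact Hkl | exact (Rinv_neq_0_compat _ Hkm)].
  - intro Q. rewrite El, Em. field. exact Hkm.
Qed.

Lemma on_circle_circ_pt (O : pt) (r th : R) : on_circle O r (circ_pt O r th).
Proof.
  unfold on_circle, circ_pt; simpl.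
  transitivity (r ^ 2 * (sin th * sin th + cos th * cos th)); [ring | rewrite sin_cos_sq; ring].
Qed.

Lemma circle_angle (O P : pt) (r : R) : 0 < r -> on_circle O r P -> exists th, circ_pt O r th = P.
Proof.
  intros Hr HP. unfold on_circle in HP.
  destruct (unit_vector_angle ((fst P - fst O) / r) ((snd P - snd O) / r)) as [th [Hc Hs]].
  { replace (((fst P - fst O) / r) ^ 2 + ((snd P - snd O) / r) ^ 2)
      with (((fst P - fst O) ^ 2 + (snd P - snd O) ^ 2) / r ^ 2) by (field; lra).
    rewrite HP. field. lra. }
  exists th. unfold circ_pt. rewrite Hc, Hs. destruct P as [px py]; simpl. f_equal; field; lra.
Qed.

(* The equation of the chord joining the points of angles ta and tb of the
   circle (O, r). *)
Definition circle_chord (O : pt) (r ta tb : R) (P : pt) : R :=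
  (fst P - fst O) * cos ((ta + tb) / 2) + (snd P - snd O) * sin ((ta + tb) / 2)
  - r * cos ((ta - tb) / 2).

Lemma circle_chord_line_form (O : pt) (r ta tb : R) : line_form (circle_chord O r ta tb).
Proof.
  set (m := (ta + tb) / 2).
  exists (cos m), (sin m), (- (fst O * cos m) - snd O * sin m - r * cos ((ta - tb) / 2)).
  split.
  - pose proof (sin_cos_sq m).
    destruct (Req_dec (cos m) 0) as [Hc | Hc]; [right; nra | left; exact Hc].
  - intro P. unfold circle_chord. fold m. ring.
Qed.

Lemma circle_chord_at (O : pt) (r ta tb th : R) :
  circle_chord O r ta tb (circ_pt O r th) = -2 * r * sin ((th - ta) / 2) * sin ((th - tb) / 2).
Proof.
  unfold circle_chord, circ_pt; simpl.
  transitivity (r * cos (th - (ta + tb) / 2) - r * cos ((ta - tb) / 2));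
    [rewrite cos_minus; ring |].
  set (x := (th - ta) / 2). set (y := (th - tb) / 2).
  replace (th - (ta + tb) / 2) with (x + y) by (unfold x, y; field).
  replace ((ta - tb) / 2) with (y - x) by (unfold x, y; field).
  rewrite cos_plus, cos_minus. ring.
Qed.

Lemma factor_on_circle (O : pt) (r M th1 th2 th3 th4 : R) (F : R -> R) (l1 l2 : pt -> R) :
  0 < r -> line_form l1 -> line_form l2 -> M <> 0 ->
  circ_pt O r th1 <> circ_pt O r th2 -> circ_pt O r th3 <> circ_pt O r th4 ->
  l1 (circ_pt O r th1) = 0 -> l1 (circ_pt O r th2) = 0 ->
  l2 (circ_pt O r th3) = 0 -> l2 (circ_pt O r th4) = 0 ->
  (forall th, F th = M * l1 (circ_pt O r th) * l2 (circ_pt O r th)) ->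
  exists K, K <> 0 /\ forall th, F th =
    K * sin ((th - th1) / 2) * sin ((th - th2) / 2) * sin ((th - th3) / 2) * sin ((th - th4) / 2).
Proof.
  intros Hr Hl1 Hl2 HM D12 D34 Z1 Z2 Z3 Z4 HF.
  assert (Hchord : forall ta tb, circle_chord O r ta tb (circ_pt O r ta) = 0 /\
                                 circle_chord O r ta tb (circ_pt O r tb) = 0).
  { intros ta tb. rewrite !circle_chord_at. unfold Rminus. rewrite !Rplus_opp_r.
    unfold Rdiv. rewrite Rmult_0_l, sin_0. split; ring. }
  destruct (Hchord th1 th2) as [C1 C2]. destruct (Hchord th3 th4) as [C3 C4].
  destruct (line_forms_proportional l1 (circle_chord O r th1 th2) _ _
              Hl1 (circle_chord_line_form _ _ _ _) D12 Z1 Z2 C1 C2) as [k1 [Hk1 E1]].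
  destruct (line_forms_proportional l2 (circle_chord O r th3 th4) _ _
              Hl2 (circle_chord_line_form _ _ _ _) D34 Z3 Z4 C3 C4) as [k2 [Hk2 E2]].
  exists (4 * r * r * M * k1 * k2). split.
  - repeat apply Rmult_integral_contrapositive_currified; lra || assumption.
  - intro th. rewrite HF, E1, E2, !circle_chord_at. ring.
Qed.

Section InscribedEllipse.

Variables (G : pt) (A B : R).
Hypotheses (HA : A <> 0) (HB : B <> 0).

Definition ell_pt (t : R) : pt := (fst G + A * cos t, snd G + B * sin t).

Definition ell_form (P : pt) : R := ((fst P - fst G) / A) ^ 2 + ((snd P - snd G) / B) ^ 2.

Definition ell_line (p q k : R) (P : pt) : R :=
  (fst P - fst G) / A * p + (snd P - snd G) / B * q + k.

Lemma ell_form_pt (t : R) : ell_form (ell_pt t) = 1.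
Proof.
  unfold ell_form, ell_pt; simpl.
  transitivity (sin t * sin t + cos t * cos t); [field; auto | apply sin_cos_sq].
Qed.

Lemma ell_line_pt (p q k t : R) : ell_line p q k (ell_pt t) = p * cos t + q * sin t + k.
Proof. unfold ell_line, ell_pt; simpl. field. auto. Qed.

Lemma ell_line_form (p q k : R) : p * p + q * q = 1 -> line_form (ell_line p q k).
Proof.
  intro Hpq. exists (p / A), (q / B), (k - p * fst G / A - q * snd G / B). split.
  - destruct (Req_dec p 0) as [Hp | Hp].
    + right. unfold Rdiv.
      apply Rmult_integral_contrapositive_currified; [nra | now apply Rinv_neq_0_compat].
    + left. unfold Rdiv.
      apply Rmult_integral_contrapositive_currified; [exact Hp | now apply Rinv_neq_0_compat].
  - intro P. unfold ell_line. field. auto.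
Qed.

Lemma ell_pt_neq (t1 t2 : R) : cos (t1 - t2) <> 1 -> ell_pt t1 <> ell_pt t2.
Proof.
  intros Hneq E. injection E as Ec Es. apply Hneq.
  assert (Hc : cos t1 = cos t2) by (apply (Rmult_eq_reg_l A); [lra | exact HA]).
  assert (Hs : sin t1 = sin t2) by (apply (Rmult_eq_reg_l B); [lra | exact HB]).
  rewrite cos_minus, Hc, Hs, Rplus_comm. apply sin_cos_sq.
Qed.

Lemma centroid_equally_spaced (th : R) :
  centroid (ell_pt th) (ell_pt (th - 2 * (PI / 3))) (ell_pt (th - 4 * (PI / 3))) = G.
Proof.
  unfold centroid, ell_pt; simpl.
  rewrite !cos_minus, !sin_minus, cos_2PI3, sin_2PI3, cos_4PI3, sin_4PI3.
  destruct G as [gx gy]; simpl. f_equal; field.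
Qed.

Lemma qform_ell_form (P : pt) : qform G (1 / A ^ 2) 0 (1 / B ^ 2) P = ell_form P.
Proof. unfold qform, ell_form. field. auto. Qed.

Lemma steiner_circumellipse_equally_spaced (th : R) :
  is_steiner_circumellipse (ell_pt th) (ell_pt (th - 2 * (PI / 3))) (ell_pt (th - 4 * (PI / 3)))
    (1 / A ^ 2) 0 (1 / B ^ 2).
Proof.
  assert (HA2 : 0 < 1 / A ^ 2) by (apply Rdiv_lt_0_compat; [lra | exact (sq_pos A HA)]).
  assert (HB2 : 0 < 1 / B ^ 2) by (apply Rdiv_lt_0_compat; [lra | exact (sq_pos B HB)]).
  unfold is_steiner_circumellipse.
  rewrite centroid_equally_spaced, !qform_ell_form, !ell_form_pt.
  repeat split; [exact HA2 | nra].
Qed.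

Lemma equally_spaced_distinct (th : R) :
  ell_pt th <> ell_pt (th - 2 * (PI / 3)) /\
  ell_pt (th - 2 * (PI / 3)) <> ell_pt (th - 4 * (PI / 3)) /\
  ell_pt th <> ell_pt (th - 4 * (PI / 3)).
Proof.
  repeat split; apply ell_pt_neq.
  - replace (th - (th - 2 * (PI / 3))) with (2 * (PI / 3)) by ring. rewrite cos_2PI3. lra.
  - replace (th - 2 * (PI / 3) - (th - 4 * (PI / 3))) with (2 * (PI / 3)) by ring.
    rewrite cos_2PI3. lra.
  - replace (th - (th - 4 * (PI / 3))) with (4 * (PI / 3)) by ring. rewrite cos_4PI3. lra.
Qed.

(* For a parameter s, first_chord s joins E(s - pi/3) and E(s + pi/3), and
   second_chord s joins E(s + pi) and E(-3s - pi). *)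
Definition first_chord (s : R) : pt -> R := ell_line (cos s) (sin s) (- 1 / 2).

Definition second_chord (s : R) : pt -> R := ell_line (cos s) (- sin s) (cos (2 * s)).

Lemma first_chord_line_form (s : R) : line_form (first_chord s).
Proof. apply ell_line_form. rewrite Rplus_comm. apply sin_cos_sq. Qed.

Lemma second_chord_line_form (s : R) : line_form (second_chord s).
Proof. apply ell_line_form. rewrite <- (sin_cos_sq s). ring. Qed.

Lemma first_chord_zero (s t : R) : cos (t - s) = 1 / 2 -> first_chord s (ell_pt t) = 0.
Proof. intro H. unfold first_chord. rewrite ell_line_pt. rewrite cos_minus in H. lra. Qed.

Lemma second_chord_zero (s t : R) : cos (t + s) = - cos (2 * s) -> second_chord s (ell_pt t) = 0.
Proof. intro H. unfold second_chord. rewrite ell_line_pt. rewrite cos_plus in H. lra. Qed.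

(* The circle of the pencil determined by the parameter phi of the fourth point,
   and the weight with which the ellipse enters the pencil. *)
Definition pencil_center (phi : R) : pt :=
  (fst G + (A ^ 2 - B ^ 2) * cos phi / (4 * A), snd G - (A ^ 2 - B ^ 2) * sin phi / (4 * B)).

Definition pencil_radius2 (phi : R) : R :=
  ((A ^ 2 - B ^ 2) * cos phi / (4 * A)) ^ 2 + ((A ^ 2 - B ^ 2) * sin phi / (4 * B)) ^ 2
  + (A ^ 2 + B ^ 2) / 2.

Definition pencil_radius (phi : R) : R := sqrt (pencil_radius2 phi).

Definition pencil_weight (s : R) : R := A ^ 2 * sin s ^ 2 + B ^ 2 * cos s ^ 2.

Lemma pencil_radius2_pos (phi : R) : 0 < pencil_radius2 phi.
Proof.
  unfold pencil_radius2.
  pose proof (sq_pos A HA). pose proof (sq_pos B HB).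
  pose proof (pow2_ge_0 ((A ^ 2 - B ^ 2) * cos phi / (4 * A))).
  pose proof (pow2_ge_0 ((A ^ 2 - B ^ 2) * sin phi / (4 * B))). lra.
Qed.

Lemma pencil_radius_pos (phi : R) : 0 < pencil_radius phi.
Proof. apply sqrt_lt_R0, pencil_radius2_pos. Qed.

Lemma pencil_weight_pos (s : R) : 0 < pencil_weight s.
Proof.
  unfold pencil_weight.
  pose proof (sq_pos A HA). pose proof (sq_pos B HB). pose proof (pow2_ge_0 (cos s)).
  destruct (Req_dec (sin s) 0) as [Hs | Hs].
  - pose proof (sin_cos_sq s) as Hsc. rewrite Hs in Hsc |- *.
    replace (cos s ^ 2) with 1 by lra. lra.
  - pose proof (sq_pos (sin s) Hs). nra.
Qed.

(* The pencil identity: when phi = -3s - pi (mod 2pi), a combination of the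
   ellipse and the circle (pencil_center phi, pencil_radius phi) is the product
   of the two chords; it holds modulo sin^2 s + cos^2 s = 1. *)
Lemma pencil_identity (phi s : R) (P : pt) :
  cos phi = - cos (3 * s) -> sin phi = sin (3 * s) ->
  pencil_weight s * (ell_form P - 1)
  - ((fst P - fst (pencil_center phi)) ^ 2 + (snd P - snd (pencil_center phi)) ^ 2
     - pencil_radius2 phi)
  = (B ^ 2 - A ^ 2) * first_chord s P * second_chord s P.
Proof.
  intros Hc Hs. rewrite cos_3a in Hc. rewrite sin_3a in Hs.
  destruct P as [x y].
  unfold pencil_weight, ell_form, pencil_center, pencil_radius2, first_chord, second_chord,
    ell_line; simpl.
  rewrite Hc, Hs, cos_2a.
  set (X := (x - fst G) / A). set (Y := (y - snd G) / B).
  apply (eq_mod_pythagoras s) with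
    (k := A ^ 2 * X ^ 2 + B ^ 2 * Y ^ 2 - (A ^ 2 - B ^ 2) * cos s * X
          + (A ^ 2 - B ^ 2) * sin s * Y - (A ^ 2 + B ^ 2) / 2).
  unfold X, Y. field. auto.
Qed.

Lemma pencil_circle_through (phi s : R) (P : pt) :
  cos phi = - cos (3 * s) -> sin phi = sin (3 * s) ->
  ell_form P = 1 -> first_chord s P * second_chord s P = 0 ->
  on_circle (pencil_center phi) (pencil_radius phi) P.
Proof.
  intros Hc Hs HE HL. pose proof (pencil_identity phi s P Hc Hs) as Id.
  rewrite HE, Rmult_assoc, HL in Id. unfold on_circle, pencil_radius.
  rewrite pow2_sqrt by exact (Rlt_le _ _ (pencil_radius2_pos phi)). lra.
Qed.

Lemma pencil_factor (phi s th1 th2 th3 th4 : R) :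
  A ^ 2 <> B ^ 2 -> cos phi = - cos (3 * s) -> sin phi = sin (3 * s) ->
  let O := pencil_center phi in let r := pencil_radius phi in
  circ_pt O r th1 <> circ_pt O r th2 -> circ_pt O r th3 <> circ_pt O r th4 ->
  first_chord s (circ_pt O r th1) = 0 -> first_chord s (circ_pt O r th2) = 0 ->
  second_chord s (circ_pt O r th3) = 0 -> second_chord s (circ_pt O r th4) = 0 ->
  exists K, K <> 0 /\ forall th, ell_form (circ_pt O r th) - 1 =
    K * sin ((th - th1) / 2) * sin ((th - th2) / 2) * sin ((th - th3) / 2) * sin ((th - th4) / 2).
Proof.
  intros HAB Hc Hs O r D12 D34 Z1 Z2 Z3 Z4.
  pose proof (pencil_weight_pos s) as Hw.
  apply (factor_on_circle O r ((B ^ 2 - A ^ 2) / pencil_weight s) th1 th2 th3 th4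
           (fun th => ell_form (circ_pt O r th) - 1) (first_chord s) (second_chord s));
    try assumption.
  - exact (pencil_radius_pos phi).
  - apply first_chord_line_form.
  - apply second_chord_line_form.
  - apply Rmult_integral_contrapositive_currified;
      [lra | apply Rinv_neq_0_compat; lra].
  - intro th. pose proof (on_circle_circ_pt O r th) as Hon. unfold on_circle in Hon.
    assert (Hr2 : r ^ 2 = pencil_radius2 phi)
      by exact (pow2_sqrt _ (Rlt_le _ _ (pencil_radius2_pos phi))).
    pose proof (pencil_identity phi s (circ_pt O r th) Hc Hs) as Id. fold O in Id.
    rewrite Hon, Hr2, Rminus_diag, Rminus_0_r in Id.
    apply (Rmult_eq_reg_l (pencil_weight s)); [| lra].
    rewrite Id. field. lra.
Qed.

Lemma first_pairing_chords (th : R) :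
  let s := th - PI / 3 in
  first_chord s (ell_pt th) = 0 /\ first_chord s (ell_pt (th - 2 * (PI / 3))) = 0 /\
  second_chord s (ell_pt (th - 4 * (PI / 3))) = 0 /\ second_chord s (ell_pt (- 3 * th)) = 0.
Proof.
  intro s. repeat split.
  - apply first_chord_zero. replace (th - s) with (PI / 3) by (unfold s; ring). apply cos_PI3.
  - apply first_chord_zero. replace (th - 2 * (PI / 3) - s) with (- (PI / 3)) by (unfold s; ring).
    rewrite cos_neg. apply cos_PI3.
  - apply second_chord_zero. replace (th - 4 * (PI / 3) + s) with (2 * s - PI) by (unfold s; field).
    rewrite cos_minus, cos_PI, sin_PI. ring.
  - apply second_chord_zero. replace (- 3 * th + s) with (- (2 * s + PI)) by (unfold s; field).
    rewrite cos_neg. apply neg_cos.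
Qed.

Lemma second_pairing_chords (th : R) :
  let s := th - PI in
  first_chord s (ell_pt (th - 2 * (PI / 3))) = 0 /\
  first_chord s (ell_pt (th - 4 * (PI / 3))) = 0 /\
  second_chord s (ell_pt th) = 0 /\ second_chord s (ell_pt (- 3 * th)) = 0.
Proof.
  intro s. repeat split.
  - apply first_chord_zero. replace (th - 2 * (PI / 3) - s) with (PI / 3) by (unfold s; field).
    apply cos_PI3.
  - apply first_chord_zero. replace (th - 4 * (PI / 3) - s) with (- (PI / 3)) by (unfold s; field).
    rewrite cos_neg. apply cos_PI3.
  - apply second_chord_zero. replace (th + s) with (2 * s + PI) by (unfold s; ring). apply neg_cos.
  - apply second_chord_zero.
    replace (- 3 * th + s) with (- ((2 * s + PI) + 2 * INR 1 * PI)) by (unfold s; simpl; ring).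
    rewrite cos_neg, cos_period. apply neg_cos.
Qed.

Lemma equally_spaced_on_pencil_circle (th : R) :
  let O := pencil_center (- 3 * th) in let r := pencil_radius (- 3 * th) in
  on_circle O r (ell_pt th) /\ on_circle O r (ell_pt (th - 2 * (PI / 3))) /\
  on_circle O r (ell_pt (th - 4 * (PI / 3))) /\ on_circle O r (ell_pt (- 3 * th)).
Proof.
  destruct (first_pairing_chords th) as [Z1 [Z2 [Z3 Z4]]].
  destruct (cos_sin_steiner_angle (- 3 * th) (th - PI / 3) 0) as [Hc Hs]; [simpl; field |].
  repeat split; apply (pencil_circle_through _ (th - PI / 3)); auto using ell_form_pt;
    [rewrite Z1 | rewrite Z2 | rewrite Z3 | rewrite Z4]; ring.
Qed.

(* The factorisation of the ellipse equation along the circumcircle.  The first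
   pairing needs E(-3 th) distinct from the third vertex; otherwise the second
   pairing is used. *)
Lemma equally_spaced_factor (th th1 th2 th3 th4 : R) :
  A ^ 2 <> B ^ 2 ->
  let O := pencil_center (- 3 * th) in let r := pencil_radius (- 3 * th) in
  circ_pt O r th1 = ell_pt th -> circ_pt O r th2 = ell_pt (th - 2 * (PI / 3)) ->
  circ_pt O r th3 = ell_pt (th - 4 * (PI / 3)) -> circ_pt O r th4 = ell_pt (- 3 * th) ->
  exists K, K <> 0 /\ forall t, ell_form (circ_pt O r t) - 1 =
    K * sin ((t - th1) / 2) * sin ((t - th2) / 2) * sin ((t - th3) / 2) * sin ((t - th4) / 2).
Proof.
  intros HAB O r P1 P2 P3 P4.
  destruct (equally_spaced_distinct th) as [D12 [D23 D13]].
  destruct (classic (ell_pt (th - 4 * (PI / 3)) = ell_pt (- 3 * th))) as [E34 | D34].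
  -
    destruct (second_pairing_chords th) as [Z2 [Z3 [Z1 Z4]]].
    destruct (cos_sin_steiner_angle (- 3 * th) (th - PI) 1) as [Hc Hs]; [simpl; field |].
    destruct (pencil_factor (- 3 * th) (th - PI) th2 th3 th1 th4 HAB Hc Hs) as [K [HK EK]];
      fold O r; rewrite ?P1, ?P2, ?P3, ?P4; auto; [rewrite <- E34; exact D13 |].
    exists K. split; [exact HK | intro t; rewrite EK; ring].
  - destruct (first_pairing_chords th) as [Z1 [Z2 [Z3 Z4]]].
    destruct (cos_sin_steiner_angle (- 3 * th) (th - PI / 3) 0) as [Hc Hs]; [simpl; field |].
    apply (pencil_factor (- 3 * th) (th - PI / 3)); fold O r; rewrite ?P1, ?P2, ?P3, ?P4; auto.
Qed.

Lemma steiner_point_equally_spaced (th : R) :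
  A ^ 2 <> B ^ 2 ->
  is_steiner_point (ell_pt th) (ell_pt (th - 2 * (PI / 3))) (ell_pt (th - 4 * (PI / 3)))
    (ell_pt (- 3 * th)).
Proof.
  intro HAB.
  set (O := pencil_center (- 3 * th)). set (r := pencil_radius (- 3 * th)).
  destruct (equally_spaced_on_pencil_circle th) as [C1 [C2 [C3 C4]]]; fold O r in C1, C2, C3, C4.
  destruct (circle_angle O _ r (pencil_radius_pos _) C1) as [th1 P1].
  destruct (circle_angle O _ r (pencil_radius_pos _) C2) as [th2 P2].
  destruct (circle_angle O _ r (pencil_radius_pos _) C3) as [th3 P3].
  destruct (circle_angle O _ r (pencil_radius_pos _) C4) as [th4 P4].
  destruct (equally_spaced_factor th th1 th2 th3 th4 HAB P1 P2 P3 P4) as [K [HK EK]].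
  exists O, r, (1 / A ^ 2), 0, (1 / B ^ 2), th1, th2, th3, th4, K.
  split; [exact (conj (pencil_radius_pos _) (conj C1 (conj C2 C3))) |].
  split; [apply steiner_circumellipse_equally_spaced |].
  repeat split; try assumption.
  intro t. rewrite centroid_equally_spaced, qform_ell_form. apply EK.
Qed.

End InscribedEllipse.

(* The centre of the ellipse through the cusps (hence their centroid). *)
Definition cusp_centroid (a b c u : R) : pt :=
  ((c ^ 2 / 2 - a ^ 2) * cos u / a, - ((a ^ 2 - c ^ 2 / 2) * sin u / b)).

(* Since 3 t_i = -u (mod 2pi), each cusp P_i' = Delta_u(t_i) is the point of
   eccentric angle t_i of the ellipse of centre cusp_centroid and semi-axes
   3c^2/(2a), 3c^2/(2b). *)
Lemma cusp_vertex_on_ellipse (a b c u : R) (i : nat) :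
  a <> 0 -> b <> 0 -> (1 <= i)%nat ->
  cusp_vertex a b c u i =
  ell_pt (cusp_centroid a b c u) (3 * c ^ 2 / (2 * a)) (- (3 * c ^ 2 / (2 * b))) (tpar u i).
Proof.
  intros Ha Hb Hi. unfold cusp_vertex. set (t := tpar u i).
  assert (H3t : 3 * t = - u - 2 * INR (i - 1) * PI).
  { unfold t, tpar. rewrite minus_INR by exact Hi. simpl. field. }
  destruct (cos_sin_of_shift (t + u) (2 * t) (i - 1)) as [C1 S1]; [lra |].
  destruct (cos_sin_of_shift u (3 * t) (i - 1)) as [C2 S2]; [lra |].
  unfold Defs.Delta, ell_pt, cusp_centroid; cbn [fst snd].
  rewrite C1, S1, C2, S2, cos_3a, sin_3a, cos_2a_cos, sin_2a. f_equal.
  - field. exact Ha.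
  - apply (eq_mod_pythagoras t) with (k := - (2 * c ^ 2 * sin t / b)). field. exact Hb.
Qed.

Lemma cusp_ellipse_not_circle (a b c : R) :
  a > b -> b > 0 -> c <> 0 -> (3 * c ^ 2 / (2 * a)) ^ 2 <> (- (3 * c ^ 2 / (2 * b))) ^ 2.
Proof.
  intros Hab Hb Hc E.
  assert (E' : (3 * c ^ 2) ^ 2 * (a ^ 2 - b ^ 2) = 0).
  { replace ((3 * c ^ 2) ^ 2 * (a ^ 2 - b ^ 2))
      with (4 * a ^ 2 * b ^ 2 * ((- (3 * c ^ 2 / (2 * b))) ^ 2 - (3 * c ^ 2 / (2 * a)) ^ 2))
      by (field; lra).
    rewrite E. ring. }
  apply Rmult_integral in E' as [E' | E'].
  - apply (pow_nonzero (3 * c ^ 2) 2); [| exact E'].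
    apply Rmult_integral_contrapositive_currified; [lra | exact (pow_nonzero c 2 Hc)].
  - nra.
Qed.

Theorem proposition4p4 (a b c u : R) :
  a > b -> b > 0 -> c > 0 -> c ^ 2 = a ^ 2 - b ^ 2 ->
  is_steiner_point (cusp_vertex a b c u 1) (cusp_vertex a b c u 2)
                   (cusp_vertex a b c u 3)
    ((a ^ 2 - 2 * b ^ 2) / a * cos u, - ((2 * a ^ 2 - b ^ 2) / b) * sin u).
Proof.
  intros Hab Hb Hc Hc2.
  assert (Ha0 : a <> 0) by lra. assert (Hb0 : b <> 0) by lra.
  set (G := cusp_centroid a b c u).
  set (A := 3 * c ^ 2 / (2 * a)). set (B := - (3 * c ^ 2 / (2 * b))).
  assert (Hc2pos : 0 < c ^ 2) by (apply pow_lt; lra).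
  assert (HA : A <> 0) by (unfold A; apply Rgt_not_eq, Rdiv_lt_0_compat; lra).
  assert (HB : B <> 0)
    by (unfold B; apply Ropp_neq_0_compat, Rgt_not_eq, Rdiv_lt_0_compat; lra).
  rewrite !cusp_vertex_on_ellipse by (assumption || lia). fold G A B.
  replace (tpar u 1) with (- u / 3) by (unfold tpar; simpl; field).
  replace (tpar u 2) with (- u / 3 - 2 * (PI / 3)) by (unfold tpar; simpl; field).
  replace (tpar u 3) with (- u / 3 - 4 * (PI / 3)) by (unfold tpar; simpl; field).
  replace ((a ^ 2 - 2 * b ^ 2) / a * cos u, - ((2 * a ^ 2 - b ^ 2) / b) * sin u)
    with (ell_pt G A B (- 3 * (- u / 3))).
  - apply steiner_point_equally_spaced; try assumption.
    apply cusp_ellipse_not_circle; lra.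
  - replace (- 3 * (- u / 3)) with u by field.
    unfold ell_pt, G, A, B, cusp_centroid; cbn [fst snd]. rewrite Hc2.
    f_equal; field; assumption.
Qed.
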